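(* If an $n$-agent network is $k$-redundant and $\bigcap_{i=1}^n\ker A_i=\{0\}$, then for any subset $\mathcal S\subset\mathcal V$ with $|\mathcal S|\ge n-k$, $\bigcap_{i\in\mathcal S}\ker A_i=\{0\}$.
   Context: An $n$-agent network: agents $\mathcal V=\{1,\dots,n\}$, each agent $i$ having real matrices $A_i\in\mathbb R^{r_i\times d}$, $b_i\in\mathbb R^{r_i}$. The network is $k$-redundant ($k\in\{0,1,\dots,n-1\}$) if for any $\mathcal S_1,\mathcal S_2\subset\mathcal V$ with $|\mathcal S_1|=|\mathcal S_2|=n-k$, $\arg\min_x\sum_{i\in\mathcal S_1}\|A_ix-b_i\|_2^2=\arg\min_x\sum_{i\in\mathcal S_2}\|A_ix-b_i\|_2^2$. *)

From HB Require Import structures.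
From mathcomp Require Import all_boot all_order all_algebra.
From mathcomp Require Import reals.
Set Implicit Arguments. Unset Strict Implicit. Unset Printing Implicit Defensive.
Import Order.TTheory GRing.Theory Num.Theory.
Local Open Scope ring_scope.

Definition sqnorm (R : realType) (m : nat) (v : 'cV[R]_m) : R :=
  \sum_(j < m) (v j 0) ^+ 2.

Definition cost (R : realType) (n d : nat) (r : 'I_n -> nat)
  (A : forall i : 'I_n, 'M[R]_(r i, d)) (b : forall i : 'I_n, 'cV[R]_(r i))
  (S : {set 'I_n}) (x : 'cV[R]_d) : R :=
  \sum_(i in S) sqnorm (A i *m x - b i).

Definition argmin_set (R : realType) (n d : nat) (r : 'I_n -> nat)
  (A : forall i : 'I_n, 'M[R]_(r i, d)) (b : forall i : 'I_n, 'cV[R]_(r i))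
  (S : {set 'I_n}) (x : 'cV[R]_d) : Prop :=
  forall y : 'cV[R]_d, cost A b S x <= cost A b S y.

Definition k_redundant (R : realType) (n d : nat) (r : 'I_n -> nat)
  (A : forall i : 'I_n, 'M[R]_(r i, d)) (b : forall i : 'I_n, 'cV[R]_(r i))
  (k : nat) : Prop :=
  forall S1 S2 : {set 'I_n}, #|S1| = (n - k)%N -> #|S2| = (n - k)%N ->
    forall x : 'cV[R]_d, argmin_set A b S1 x <-> argmin_set A b S2 x.

Definition trivial_common_kernel (R : realType) (n d : nat) (r : 'I_n -> nat)
  (A : forall i : 'I_n, 'M[R]_(r i, d)) (S : {set 'I_n}) : Prop :=
  forall x : 'cV[R]_d, (forall i, i \in S -> A i *m x = 0) -> x = 0.

From HB Require Import structures.
From mathcomp Require Import all_boot all_order all_algebra.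
From mathcomp Require Import reals.
From mathcomp Require Import lra ring zify.
Set Implicit Arguments. Unset Strict Implicit. Unset Printing Implicit Defensive.
Import Order.TTheory GRing.Theory Num.Theory.
Local Open Scope ring_scope.

(* Take S1 in S with |S1| = n - k and a least-squares minimizer z for S1.  If x
   lies in ker A_i for all i in S1, then z + x is a minimizer for S1 as well, so
   by k-redundancy z and z + x are minimizers for every S2 with |S2| = n - k.
   Two minimizers of a least-squares cost differ by a vector of the common kernel
   of the agents involved, so choosing S2 containing i gives A_i x = 0 for every
   agent i, and x = 0. *)

Lemma exists_card_between (T : finType) (A C : {set T}) (m : nat) :
  A \subset C -> (#|A| <= m <= #|C|)%N ->
  exists B : {set T}, [/\ A \subset B, B \subset C & #|B| = m].
Proof.
move=> sAC /andP[leAm lemC].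
have : (m - #|A| <= #|C :\: A|)%N by rewrite cardsDS //; lia.
move=> /card_geqP[s [s_uniq s_size sCA]].
set D := [set x in s].
have : D \subset C :\: A by apply/subsetP=> x; rewrite inE => /sCA.
rewrite subsetD => /andP[sDC dDA].
exists (A :|: D); split.
- exact: subsetUl.
- by rewrite subUset sAC.
- rewrite cardsU setIC disjoint_setI0 // cards0 cardsE (card_uniqP s_uniq); lia.
Qed.

Section SquaredNorm.
Variable R : realType.

Lemma sqnorm_ge0 m (v : 'cV[R]_m) : 0 <= sqnorm v.
Proof. by apply: sumr_ge0 => j _; rewrite sqr_ge0. Qed.

Lemma sqnorm_eq0 m (v : 'cV[R]_m) : (sqnorm v == 0) = (v == 0).
Proof.
apply/eqP/eqP=> [v0|->]; last by apply: big1 => j _; rewrite mxE expr0n.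
apply/matrixP=> j k; rewrite (ord1 k) mxE; apply/eqP.
by rewrite -sqrf_eq0; apply/eqP/(psumr_eq0P _ v0) => // i _; apply: sqr_ge0.
Qed.

Lemma sqnormE m (v : 'cV[R]_m) : sqnorm v = (v^T *m v) 0 0.
Proof. by rewrite /sqnorm mxE; apply: eq_bigr => j _; rewrite !mxE expr2. Qed.

Lemma sqnormZ m (a : R) (v : 'cV[R]_m) : sqnorm (a *: v) = a ^+ 2 * sqnorm v.
Proof. by rewrite /sqnorm mulr_sumr; apply: eq_bigr => j _; rewrite mxE exprMn. Qed.

Lemma sqnormD m (u v : 'cV[R]_m) :
  sqnorm (u + v) = sqnorm u + 2 * (u^T *m v) 0 0 + sqnorm v.
Proof.
rewrite /sqnorm mxE mulr_sumr -!big_split /=.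
by apply: eq_bigr => j _; rewrite !mxE; ring.
Qed.

End SquaredNorm.

Section LeastSquares.
Variables (R : realType) (n d : nat) (r : 'I_n -> nat).
Variables (A : forall i : 'I_n, 'M[R]_(r i, d)) (b : forall i : 'I_n, 'cV[R]_(r i)).
Implicit Types (S : {set 'I_n}) (y z v : 'cV[R]_d).

Definition gram S : 'M[R]_d := \sum_(i in S) (A i)^T *m A i.

Definition moment S : 'rV[R]_d := \sum_(i in S) (b i)^T *m A i.

Lemma sum_sqnorm_gram S v :
  \sum_(i in S) sqnorm (A i *m v) = (v^T *m gram S *m v) 0 0.
Proof.
rewrite /gram mulmx_sumr mulmx_suml summxE; apply: eq_bigr => i _.
by rewrite sqnormE trmx_mul !mulmxA.
Qed.

Lemma gram_mulmx_eq0 S p (V : 'M[R]_(d, p)) :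
  gram S *m V = 0 -> {in S, forall i, A i *m V = 0}.
Proof.
have colM m (M : 'M[R]_(m, d)) j : col j (M *m V) = M *m col j V.
  by rewrite !colE mulmxA.
move=> GV i iS; apply/matrixP=> k j; rewrite [RHS]mxE.
have Gv : gram S *m col j V = 0 by rewrite -colM GV col0.
have : \sum_(l in S) sqnorm (A l *m col j V) = 0.
  by rewrite sum_sqnorm_gram -mulmxA Gv mulmx0 mxE.
move=> /(psumr_eq0P (fun l _ => sqnorm_ge0 _))/(_ i iS)/eqP.
by rewrite sqnorm_eq0 -colM => /eqP/matrixP/(_ k 0); rewrite !mxE.
Qed.

Lemma moment_sub_gram S : (moment S <= gram S)%MS.
Proof.
rewrite submxE /moment mulmx_suml; apply/eqP/big1=> i iS.
by rewrite -mulmxA (gram_mulmx_eq0 (mulmx_coker _) iS) mulmx0.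
Qed.

Lemma costD S z v :
  cost A b S (z + v) = cost A b S z
    + 2 * ((z^T *m gram S - moment S) *m v) 0 0
    + \sum_(i in S) sqnorm (A i *m v).
Proof.
rewrite /cost /gram /moment mulmx_sumr -sumrB mulmx_suml summxE mulr_sumr.
rewrite -!big_split /=; apply: eq_bigr => i _.
rewrite mulmxDr (addrAC (A i *m z)) sqnormD.
by rewrite linearB /= trmx_mul !mulmxBl !mulmxA.
Qed.

Lemma argmin_exists S : exists z, argmin_set A b S z.
Proof.
have [w wG] := submxP (moment_sub_gram S).
exists w^T => y; rewrite -(subrK w^T y) addrC costD trmxK -wG subrr mul0mx.
by rewrite mxE mulr0 addr0 lerDl sumr_ge0 // => i _; apply: sqnorm_ge0.
Qed.

Lemma cost_addr_ker S z v :
  {in S, forall i, A i *m v = 0} -> cost A b S (z + v) = cost A b S z.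
Proof.
by move=> Av; apply: eq_bigr => i iS; rewrite mulmxDr Av // addr0.
Qed.

Lemma argmin_cost_eq S y z :
  argmin_set A b S y -> argmin_set A b S z -> cost A b S y = cost A b S z.
Proof. by move=> miny minz; apply/le_anti; rewrite miny minz. Qed.

Lemma argmin_subr_ker S y z :
  argmin_set A b S y -> argmin_set A b S z -> {in S, forall i, A i *m (y - z) = 0}.
Proof.
(* Along the segment from z to y the cost is c + 2 t L + t^2 Q with c minimal;
   it equals c at t = 1 and is at least c at t = 1/2, which forces Q <= 0. *)
move=> miny minz; set v := y - z.
set L := ((z^T *m gram S - moment S) *m v) 0 0.
set Q := \sum_(i in S) sqnorm (A i *m v).
have costy : cost A b S y = cost A b S z + 2 * L + Q.
  by rewrite -costD /v addrC subrK.
have costm :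
    cost A b S (z + 2^-1 *: v) = cost A b S z + 2 * (2^-1 * L) + 2^-1 ^+ 2 * Q.
  rewrite costD -scalemxAr mxE mulr_sumr; congr (_ + _).
  by apply: eq_bigr => i _; rewrite -scalemxAr sqnormZ.
have Q0 : Q = 0.
  apply/le_anti; rewrite sumr_ge0 ?andbT => [|i _]; last exact: sqnorm_ge0.
  have := minz (z + 2^-1 *: v); have := argmin_cost_eq miny minz.
  rewrite costy costm; lra.
move=> i iS; apply/eqP; rewrite -sqnorm_eq0; apply/eqP.
exact: (psumr_eq0P (fun j _ => sqnorm_ge0 (A j *m v)) Q0).
Qed.

End LeastSquares.

Theorem lemma4 (R : realType) (n d : nat) (r : 'I_n -> nat)
  (A : forall i : 'I_n, 'M[R]_(r i, d)) (b : forall i : 'I_n, 'cV[R]_(r i))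
  (k : nat) :
  (k < n)%N ->
  k_redundant A b k ->
  trivial_common_kernel A [set: 'I_n] ->
  forall S : {set 'I_n}, (n - k <= #|S|)%N -> trivial_common_kernel A S.
Proof.
move=> lt_kn red full S leS x kerS.
have card0_S : (#|@set0 'I_n| <= n - k <= #|S|)%N by rewrite cards0.
have [S1 [_ sS1S cardS1]] := exists_card_between (sub0set S) card0_S.
have [z minz] := argmin_exists A b S1.
have minzx : argmin_set A b S1 (z + x).
  by move=> y; rewrite cost_addr_ker // => i /(subsetP sS1S) /kerS.
apply: full => i _.
have card1_T : (#|[set i]| <= n - k <= #|[set: 'I_n]|)%N.
  by rewrite cards1 cardsT card_ord; lia.
have [S2 [iS2 _ cardS2]] := exists_card_between (subsetT [set i]) card1_T.
have toS2 := fun y => (red S1 S2 cardS1 cardS2 y).1.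
have := argmin_subr_ker (toS2 _ minzx) (toS2 _ minz).
by rewrite addrC addKr; apply; rewrite (subsetP iS2) ?set11.
Qed.
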